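(* Let $0<\gamma<2$, $\gamma\neq 4/3$, let $V\in C^3(\mathbb{R})$ with $V\ge 0$, and let $\chi\in C^3(\mathbb{R})$ with $\chi>0$. Consider the flow of the system $(\ast)$ on $\Sigma$ (see context), and set $Z^+=\{(x,y,z,\phi)\in\Sigma: z>0\}$ and $X^0=\{(x,y,z,\phi)\in\Sigma: x=0\}$. Then for every $p\in Z^+\setminus X^0$ the $\alpha$-limit set and $\omega$-limit set of $p$ satisfy $\alpha(p)\subset X^0$ and $\omega(p)\subset\partial Z^+$, where $\partial Z^+$ denotes the boundary of $Z^+$ (the points of $\overline{Z^+}$ with $z=0$).
   Context: The system $(\ast)$ is the autonomous system in $(x,y,z,\phi)\in\mathbb{R}^4$ (prime denotes $d/d\tau$): $x'=\tfrac12 x(2y^2+\gamma z^2)$, $y'=y^3+\tfrac12(\gamma z^2-2)y-\dfrac{x^2 V'(\phi)}{3\sqrt6}+\dfrac{(4-3\gamma)z^2}{2\sqrt6}\,\dfrac{\chi'(\phi)}{\chi(\phi)}$, $z'=\tfrac12 z\big(2y^2+(z^2-1)\gamma\big)-\dfrac{(4-3\gamma)yz}{2\sqrt6}\,\dfrac{\chi'(\phi)}{\chi(\phi)}$, $\phi'=\sqrt{2/3}\,y$, considered on the state space $\Sigma=\{(x,y,z,\phi)\in\mathbb{R}^4: x\ge0,\ z\ge0,\ y^2+z^2+\tfrac13x^2V(\phi)=1\}$. (It arises from a flat FRW cosmology with scalar field $\phi$, potential $V$, coupling $\chi$ and a barotropic fluid of density $\rho$, via $x=1/H$, $y=\dot\phi/(\sqrt6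 H)$, $z=\sqrt{\rho}/(\sqrt3 H)$, $d\tau=3H\,dt$.) For a point $p$, $\omega(p)$ (resp. $\alpha(p)$) is the set of limits of $\psi_{t_i}(p)$ along sequences $t_i\to+\infty$ (resp. $t_i\to-\infty$), $\psi$ being the flow. *)

From Stdlib Require Import Reals Lra.
Open Scope R_scope.

Fixpoint Ck (k : nat) (f : R -> R) : Prop :=
  match k with
  | O => continuity f
  | S n => exists f' : R -> R,
      (forall t, derivable_pt_lim f t (f' t)) /\ Ck n f'
  end.

Record pt := mkpt { px : R; py : R; pz : R; pphi : R }.

(* The vector field of system (ast); dV, dchi are the derivatives V', chi'. *)
Definition field (gamma : R) (V dV chi dchi : R -> R) (p : pt) : pt :=
  let x := px p in let y := py p in let z := pz p in let phi := pphi p in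
  mkpt
    (/2 * x * (2 * y ^ 2 + gamma * z ^ 2))
    (y ^ 3 + /2 * (gamma * z ^ 2 - 2) * y
       - x ^ 2 * dV phi / (3 * sqrt 6)
       + (4 - 3 * gamma) * z ^ 2 / (2 * sqrt 6) * (dchi phi / chi phi))
    (/2 * z * (2 * y ^ 2 + (z ^ 2 - 1) * gamma)
       - (4 - 3 * gamma) * y * z / (2 * sqrt 6) * (dchi phi / chi phi))
    (sqrt (2 / 3) * y).

Definition is_solution (gamma : R) (V dV chi dchi : R -> R) (s : R -> pt) : Prop :=
  forall t,
    derivable_pt_lim (fun u => px (s u)) t (px (field gamma V dV chi dchi (s t))) /\
    derivable_pt_lim (fun u => py (s u)) t (py (field gamma V dV chi dchi (s t))) /\
    derivable_pt_lim (fun u => pz (s u)) t (pz (field gamma V dV chi dchi (s t))) /\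
    derivable_pt_lim (fun u => pphi (s u)) t (pphi (field gamma V dV chi dchi (s t))).

Definition in_Sigma (V : R -> R) (p : pt) : Prop :=
  0 <= px p /\ 0 <= pz p /\
  py p ^ 2 + pz p ^ 2 + / 3 * px p ^ 2 * V (pphi p) = 1.

Definition in_Zplus (V : R -> R) (p : pt) : Prop := in_Sigma V p /\ 0 < pz p.
Definition in_X0 (V : R -> R) (p : pt) : Prop := in_Sigma V p /\ px p = 0.

Definition pt_dist (p q : pt) : R :=
  Rabs (px p - px q) + Rabs (py p - py q) + Rabs (pz p - pz q) + Rabs (pphi p - pphi q).

Definition in_bdZplus (V : R -> R) (q : pt) : Prop :=
  (forall eps, 0 < eps -> exists r, in_Zplus V r /\ pt_dist r q < eps) /\ pz q = 0.

Definition pt_cv (u : nat -> pt) (q : pt) : Prop :=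
  Un_cv (fun n => px (u n)) (px q) /\ Un_cv (fun n => py (u n)) (py q) /\
  Un_cv (fun n => pz (u n)) (pz q) /\ Un_cv (fun n => pphi (u n)) (pphi q).

Definition omega_pt (s : R -> pt) (q : pt) : Prop :=
  exists t : nat -> R, cv_infty t /\ pt_cv (fun n => s (t n)) q.
Definition alpha_pt (s : R -> pt) (q : pt) : Prop :=
  exists t : nat -> R, cv_infty (fun n => - t n) /\ pt_cv (fun n => s (t n)) q.

From Stdlib Require Import Reals Lra Psatz Lia.
Open Scope R_scope.

(* The proof rests on three facts about a solution of the system.
   (1) x, the constraint defect [y^2 + z^2 + x^2 V/3 - 1] and the weighted
       quantity [z chi(phi)^k e^{gamma tau/2}], k = (4 - 3 gamma)/4, each solve
       a scalar linear equation [w' = a w] with continuous coefficient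
       (a = y^2 + gamma z^2/2, or twice it for the defect).
   (2) Such equations have unique solutions (Gronwall-type estimate on the
       weighted energy [w^2 e^{L tau}]); hence zeros propagate, signs are
       preserved, and two solutions of the same equation are proportional.
   (3) Consequently the orbit stays in Sigma with x, z > 0, and
       [z chi(phi)^k / x = C e^{- gamma tau/2}] with C > 0.
   Along a sequence tau_n -> -oo (resp. +oo) with convergent points, the
   exponential factor forces x (resp. z) to 0, while closedness of Sigma
   puts the limit in X^0 (resp. on the boundary of Z^+). *)

(* Differentiation rules: the Stdlib rules restated on lambda terms, so that
   they apply to composite expressions without unfolding [plus_fct],
   [mult_fct], [comp], ... *)

Lemma D_plus f g t a b : derivable_pt_lim f t a -> derivable_pt_lim g t b ->
  derivable_pt_lim (fun u => f u + g u) t (a + b).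
Proof. intros; apply (derivable_pt_lim_plus f g); auto. Qed.

Lemma D_minus f g t a b : derivable_pt_lim f t a -> derivable_pt_lim g t b ->
  derivable_pt_lim (fun u => f u - g u) t (a - b).
Proof. intros; apply (derivable_pt_lim_minus f g); auto. Qed.

Lemma D_mult f g t a b : derivable_pt_lim f t a -> derivable_pt_lim g t b ->
  derivable_pt_lim (fun u => f u * g u) t (a * g t + f t * b).
Proof. intros; apply (derivable_pt_lim_mult f g); auto. Qed.

Lemma D_comp f g t a b : derivable_pt_lim g t a -> derivable_pt_lim f (g t) b ->
  derivable_pt_lim (fun u => f (g u)) t (b * a).
Proof. intros; apply (derivable_pt_lim_comp g f); auto. Qed.

Lemma D_eq f t a b : derivable_pt_lim f t a -> a = b -> derivable_pt_lim f t b.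
Proof. intros; subst; auto. Qed.

Lemma D_cont f t a : derivable_pt_lim f t a -> continuity_pt f t.
Proof. intro H; apply derivable_continuous_pt; exists a; exact H. Qed.

Lemma D_linear c t : derivable_pt_lim (fun u => c * u) t c.
Proof.
  apply (D_eq _ _ (0 * t + c * 1)); [|ring].
  apply (D_mult (fun _ => c) (fun u => u));
    [apply derivable_pt_lim_const | apply derivable_pt_lim_id].
Qed.

Lemma bounded_on_segment (a : R -> R) lo hi : lo <= hi ->
  (forall t, continuity_pt a t) -> exists K, forall c, lo <= c <= hi -> - K <= a c <= K.
Proof.
  intros Hle Hc.
  destruct (continuity_ab_maj a lo hi Hle (fun c _ => Hc c)) as [M [HM _]].
  destruct (continuity_ab_min a lo hi Hle (fun c _ => Hc c)) as [m [Hm _]].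
  exists (Rabs (a M) + Rabs (a m)); intros c Hcc.
  specialize (HM c Hcc); specialize (Hm c Hcc).
  pose proof (Rle_abs (a M)); pose proof (Rle_abs (- a m)); rewrite Rabs_Ropp in *.
  pose proof (Rabs_pos (a M)); pose proof (Rabs_pos (a m)); split; lra.
Qed.

Section LinearODE.
Variables w a : R -> R.
Hypothesis Hw : forall t, derivable_pt_lim w t (a t * w t).
Hypothesis Ha : forall t, continuity_pt a t.

(* Mean value theorem for the weighted energy [w^2 e^{L u}]; its derivative
   has the sign of [2 a + L], which a bound on [a] controls. *)
Lemma weighted_energy_mvt L t0 t1 : t0 < t1 -> exists c, t0 < c < t1 /\
  w t1 ^ 2 * exp (L * t1) - w t0 ^ 2 * exp (L * t0)
  = exp (L * c) * w c ^ 2 * (2 * a c + L) * (t1 - t0).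
Proof.
  intro Ht.
  destruct (MVT_cor2 (fun u => w u ^ 2 * exp (L * u))
              (fun c => exp (L * c) * w c ^ 2 * (2 * a c + L)) t0 t1 Ht)
    as [c [Hc Hc01]]; [|exists c; split; [exact Hc01 | exact Hc]].
  intros c _. eapply D_eq.
  - apply D_mult.
    + apply (D_comp (fun x => x ^ 2) w); [apply Hw | apply derivable_pt_lim_pow].
    + apply (D_comp exp (fun u => L * u)); [apply D_linear | apply derivable_pt_lim_exp].
  - simpl; ring.
Qed.

Lemma linear_ode_zero t0 : w t0 = 0 -> forall t, w t = 0.
Proof.
  intros H0 t.
  assert (Hsq : forall L, w t ^ 2 * exp (L * t) <= 0 -> w t = 0).
  { intros L HL. pose proof (exp_pos (L * t)).
    assert (w t ^ 2 <= 0) by (apply (Rmult_le_reg_r (exp (L * t))); lra).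
    apply Rle_antisym; nra. }
  assert (Hweight : forall L c, 0 <= exp (L * c) * w c ^ 2)
    by (intros; apply Rmult_le_pos; [left; apply exp_pos | apply pow2_ge_0]).
  destruct (Rtotal_order t t0) as [Hlt | [-> | Hgt]]; [| exact H0 |].
  - destruct (bounded_on_segment a t t0 (Rlt_le _ _ Hlt) Ha) as [K HK].
    destruct (weighted_energy_mvt (2 * K) t t0 Hlt) as [c [Hc Heq]].
    destruct (HK c ltac:(lra)). apply (Hsq (2 * K)).
    assert (0 <= exp (2 * K * c) * w c ^ 2 * (2 * a c + 2 * K) * (t0 - t))
      by (apply Rmult_le_pos; [apply Rmult_le_pos|]; auto; lra).
    rewrite H0 in Heq. simpl in Heq |- *. lra.
  - destruct (bounded_on_segment a t0 t (Rlt_le _ _ Hgt) Ha) as [K HK].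
    destruct (weighted_energy_mvt (- (2 * K)) t0 t Hgt) as [c [Hc Heq]].
    destruct (HK c ltac:(lra)). apply (Hsq (- (2 * K))).
    assert (0 <= exp (- (2 * K) * c) * w c ^ 2 * - (2 * a c + - (2 * K)) * (t - t0))
      by (apply Rmult_le_pos; [apply Rmult_le_pos|]; auto; lra).
    rewrite H0 in Heq. simpl in Heq |- *. lra.
Qed.

Lemma linear_ode_pos : 0 < w 0 -> forall t, 0 < w t.
Proof.
  intros H0 t. destruct (Rlt_le_dec 0 (w t)) as [|Hneg]; [assumption | exfalso].
  assert (Hc : continuity w) by (intro u; exact (D_cont _ _ _ (Hw u))).
  assert (Hz : exists z, w z = 0).
  { destruct (Rle_dec 0 t).
    - destruct (IVT_cor w 0 t Hc) as [z [_ Hz]]; [assumption | nra | eauto].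
    - destruct (IVT_cor w t 0 Hc) as [z [_ Hz]]; [lra | nra | eauto]. }
  destruct Hz as [z Hz]. pose proof (linear_ode_zero z Hz 0). lra.
Qed.

End LinearODE.

(* Two solutions of the same linear equation are proportional: their
   cross difference [w * v 0 - w 0 * v] solves it too and vanishes at 0. *)
Lemma linear_ode_proportional (w v a : R -> R) :
  (forall t, derivable_pt_lim w t (a t * w t)) ->
  (forall t, derivable_pt_lim v t (a t * v t)) ->
  (forall t, continuity_pt a t) ->
  forall t, w t * v 0 = w 0 * v t.
Proof.
  intros Hw Hv Ha t. apply Rminus_diag_uniq.
  apply (linear_ode_zero (fun u => w u * v 0 - w 0 * v u) a) with 0; [|exact Ha|ring].
  intro u. eapply D_eq.
  - apply D_minus; [apply (D_mult w (fun _ => v 0)) | apply (D_mult (fun _ => w 0) v)];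
      first [apply derivable_pt_lim_const | auto].
  - ring.
Qed.

Lemma cv_const c : Un_cv (fun _ => c) c.
Proof. intros e He; exists O; intros; unfold Rdist; rewrite Rminus_diag, Rabs_R0; lra. Qed.

Lemma exp_decay_cv (u : nat -> R) b : 0 < b -> cv_infty u ->
  Un_cv (fun n => exp (- (b * u n))) 0.
Proof.
  intros Hb Hu eps Heps. destruct (Hu (- ln eps / b)) as [N HN].
  exists N; intros n Hn. specialize (HN n Hn).
  unfold Rdist; rewrite Rminus_0_r, Rabs_pos_eq by (left; apply exp_pos).
  rewrite <- (exp_ln eps Heps); apply exp_increasing.
  apply (Rmult_lt_compat_l b) in HN; [|exact Hb].
  replace (b * (- ln eps / b)) with (- ln eps) in HN by (field; lra). lra.
Qed.

Lemma cv_decaying_product (f g h u : nat -> R) (K b l m : R) :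
  0 < b -> cv_infty u -> Un_cv g l -> Un_cv h m ->
  (forall n, f n = K * g n * h n * exp (- (b * u n))) -> Un_cv f 0.
Proof.
  intros Hb Hu Hg Hh Hf eps Heps.
  assert (Hcv : Un_cv (fun n => K * g n * h n * exp (- (b * u n))) (K * l * m * 0)).
  { apply CV_mult; [apply CV_mult; [apply CV_mult|]|]; auto using cv_const, exp_decay_cv. }
  rewrite Rmult_0_r in Hcv. destruct (Hcv eps Heps) as [N HN].
  exists N; intros n Hn; rewrite Hf; auto.
Qed.

Lemma Sigma_closed V (u : nat -> pt) q : (forall t, continuity_pt V t) ->
  (forall n, in_Sigma V (u n)) -> pt_cv u q -> in_Sigma V q.
Proof.
  intros HV Hs [Hx [Hy [Hz Hp]]].
  assert (Hsq : forall (v : nat -> R) l, Un_cv v l -> Un_cv (fun n => v n ^ 2) (l ^ 2)).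
  { intros v l Hv; apply (continuity_seq (fun x => x ^ 2)); [|exact Hv].
    apply derivable_continuous_pt, derivable_pt_pow. }
  split; [|split].
  - apply (@Rle_cv_lim (fun _ => 0) (fun n => px (u n))); auto using cv_const; apply Hs.
  - apply (@Rle_cv_lim (fun _ => 0) (fun n => pz (u n))); auto using cv_const; apply Hs.
  - apply (UL_sequence (fun n => py (u n) ^ 2 + pz (u n) ^ 2 + / 3 * px (u n) ^ 2 * V (pphi (u n)))).
    + apply CV_plus; [apply CV_plus|]; auto.
      apply CV_mult; [apply CV_mult|]; auto using cv_const, continuity_seq.
    + intros e He; exists O; intros n _; unfold Rdist.
      destruct (Hs n) as [_ [_ ->]]; rewrite Rminus_diag, Rabs_R0; lra.
Qed.

Lemma bdZplus_of_limit V (u : nat -> pt) q :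
  (forall n, in_Zplus V (u n)) -> pt_cv u q -> pz q = 0 -> in_bdZplus V q.
Proof.
  intros Hs [Hx [Hy [Hz Hp]]] H0. split; [|exact H0]. intros eps Heps.
  assert (He : eps / 4 > 0) by lra.
  destruct (Hx _ He) as [N1 H1], (Hy _ He) as [N2 H2],
           (Hz _ He) as [N3 H3], (Hp _ He) as [N4 H4].
  set (n := (N1 + N2 + N3 + N4)%nat). exists (u n); split; [apply Hs|].
  specialize (H1 n ltac:(unfold n; lia)); specialize (H2 n ltac:(unfold n; lia));
  specialize (H3 n ltac:(unfold n; lia)); specialize (H4 n ltac:(unfold n; lia)).
  unfold pt_dist, Rdist in *. lra.
Qed.

(* The constant [sqrt (2/3)] of the phi-equation, written with [sqrt 6]
   as in the other equations so that [field] can compare them. *)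
Lemma sqrt_2_3 : sqrt (2 / 3) = 2 / sqrt 6.
Proof.
  assert (H6 : 0 < sqrt 6) by (apply sqrt_lt_R0; lra).
  apply sqrt_lem_1; [lra | left; apply Rdiv_lt_0_compat; lra |].
  replace (2 / sqrt 6 * (2 / sqrt 6)) with (4 / (sqrt 6 * sqrt 6)) by (field; lra).
  rewrite sqrt_sqrt by lra. field.
Qed.

Lemma sqrt6_neq0 : sqrt 6 <> 0.
Proof. apply Rgt_not_eq, sqrt_lt_R0; lra. Qed.

Section Orbit.
Variables (gamma : R) (V dV chi dchi : R -> R) (s : R -> pt).
Hypothesis Hsol : is_solution gamma V dV chi dchi s.
Hypothesis HdV : forall t, derivable_pt_lim V t (dV t).
Hypothesis Hdchi : forall t, derivable_pt_lim chi t (dchi t).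
Hypothesis Hchi : forall t, 0 < chi t.

Local Notation X u := (px (s u)).
Local Notation Y u := (py (s u)).
Local Notation Z u := (pz (s u)).
Local Notation P u := (pphi (s u)).

Local Notation rate u := (Y u ^ 2 + gamma / 2 * Z u ^ 2).
(* Defect of the Friedmann constraint defining Sigma. *)
Local Notation defect u := (Y u ^ 2 + Z u ^ 2 + / 3 * X u ^ 2 * V (P u) - 1).
(* The weight chi(phi)^k, k = (4 - 3 gamma)/4, which absorbs the coupling
   term of the z-equation. *)
Local Notation weight u := (exp ((4 - 3 * gamma) / 4 * ln (chi (P u)))).

Lemma rate_continuous t : continuity_pt (fun u => rate u) t.
Proof.
  eapply D_cont, D_plus;
    [ apply (D_comp (fun x => x ^ 2) (fun u => Y u))
    | apply (D_mult (fun _ => gamma / 2) (fun u => Z u ^ 2));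
      [ apply derivable_pt_lim_const | apply (D_comp (fun x => x ^ 2) (fun u => Z u)) ] ];
    first [apply (Hsol t) | apply derivable_pt_lim_pow].
Qed.

Lemma x_linear t : derivable_pt_lim (fun u => X u) t (rate t * X t).
Proof. eapply D_eq; [apply (Hsol t) | unfold field; simpl; field]. Qed.

Lemma defect_linear t : derivable_pt_lim (fun u => defect u) t (2 * rate t * defect t).
Proof.
  destruct (Hsol t) as [Hx [Hy [Hz Hp]]].
  eapply D_eq.
  - apply (D_minus _ (fun _ => 1)); [|apply derivable_pt_lim_const].
    apply D_plus; [apply D_plus|].
    + apply (D_comp (fun x => x ^ 2) (fun u => Y u)); [exact Hy | apply derivable_pt_lim_pow].
    + apply (D_comp (fun x => x ^ 2) (fun u => Z u)); [exact Hz | apply derivable_pt_lim_pow].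
    + apply (D_mult (fun u => / 3 * X u ^ 2) (fun u => V (P u))).
      * apply (D_mult (fun _ => / 3) (fun u => X u ^ 2)); [apply derivable_pt_lim_const|].
        apply (D_comp (fun x => x ^ 2) (fun u => X u)); [exact Hx | apply derivable_pt_lim_pow].
      * apply (D_comp V (fun u => P u)); [exact Hp | apply HdV].
  - unfold field; simpl; rewrite sqrt_2_3.
    field; repeat split; first [apply sqrt6_neq0 | apply Rgt_not_eq, Hchi].
Qed.

Lemma weighted_z_linear t :
  derivable_pt_lim (fun u => Z u * weight u * exp (gamma / 2 * u)) t
    (rate t * (Z t * weight t * exp (gamma / 2 * t))).
Proof.
  destruct (Hsol t) as [_ [_ [Hz Hp]]].
  eapply D_eq.
  - apply D_mult; [apply D_mult|].
    + exact Hz.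
    + apply (D_comp exp (fun u => (4 - 3 * gamma) / 4 * ln (chi (P u))));
        [|apply derivable_pt_lim_exp].
      apply (D_mult (fun _ => (4 - 3 * gamma) / 4) (fun u => ln (chi (P u))));
        [apply derivable_pt_lim_const|].
      apply (D_comp ln (fun u => chi (P u))); [|apply derivable_pt_lim_ln, Hchi].
      apply (D_comp chi (fun u => P u)); [exact Hp | apply Hdchi].
    + apply (D_comp exp (fun u => gamma / 2 * u)); [apply D_linear | apply derivable_pt_lim_exp].
  - unfold field; simpl; rewrite sqrt_2_3.
    field; repeat split; first [apply sqrt6_neq0 | apply Rgt_not_eq, Hchi].
Qed.

Lemma x_positive : 0 < X 0 -> forall t, 0 < X t.
Proof. exact (linear_ode_pos _ _ x_linear rate_continuous). Qed.

Lemma defect_vanishes : defect 0 = 0 -> forall t, defect t = 0.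
Proof.
  intro H0. apply (linear_ode_zero (fun u => defect u) (fun u => 2 * rate u) defect_linear) with 0;
    [|exact H0].
  intro t; apply (continuity_pt_mult (fun _ => 2) (fun u => rate u)); [|apply rate_continuous].
  apply continuity_pt_const; intros ? ?; reflexivity.
Qed.

(* First integral: [z chi(phi)^k e^{gamma tau / 2} / x] is constant along
   the orbit, the two solutions of [w' = rate w] being proportional. *)
Lemma first_integral t :
  Z t * weight t * exp (gamma / 2 * t) * X 0 = Z 0 * weight 0 * X t.
Proof.
  pose proof (linear_ode_proportional _ _ _ weighted_z_linear x_linear rate_continuous t) as H.
  cbv beta in H; rewrite Rmult_0_r, exp_0, Rmult_1_r in H; exact H.
Qed.

Lemma orbit_in_Zplus : in_Zplus V (s 0) -> ~ in_X0 V (s 0) ->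
  forall t, in_Zplus V (s t) /\ 0 < X t.
Proof.
  intros [[Hx0 [_ HS0]] Hz0] HnX t.
  assert (HX0 : 0 < X 0).
  { destruct Hx0 as [|Hx0]; [assumption|].
    exfalso; apply HnX; split; [repeat split; lra | symmetry; exact Hx0]. }
  pose proof (x_positive HX0 t) as HXt.
  assert (HZt : 0 < Z t).
  { pose proof (first_integral t) as Hfi.
    pose proof (exp_pos ((4 - 3 * gamma) / 4 * ln (chi (P 0)))).
    pose proof (exp_pos ((4 - 3 * gamma) / 4 * ln (chi (P t)))).
    pose proof (exp_pos (gamma / 2 * t)).
    assert (0 < weight t * exp (gamma / 2 * t) * X 0) by (repeat apply Rmult_lt_0_compat; lra).
    assert (0 < Z 0 * weight 0 * X t) by (repeat apply Rmult_lt_0_compat; lra).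
    nra. }
  pose proof (defect_vanishes ltac:(lra) t).
  split; [split; [repeat split; lra | exact HZt] | exact HXt].
Qed.

Lemma chi_power_cv c (phis : nat -> R) l : Un_cv phis l ->
  Un_cv (fun n => exp (c * ln (chi (phis n)))) (exp (c * ln (chi l))).
Proof.
  apply (continuity_seq (fun v => exp (c * ln (chi v)))).
  eapply D_cont, (D_comp exp (fun v => c * ln (chi v))); [|apply derivable_pt_lim_exp].
  apply (D_mult (fun _ => c) (fun v => ln (chi v))); [apply derivable_pt_lim_const|].
  apply (D_comp ln chi); [apply Hdchi | apply derivable_pt_lim_ln, Hchi].
Qed.

(* Backward in time, the factor [e^{gamma tau / 2}] kills x:
   every alpha-limit point lies in X^0. *)
Lemma alpha_limit_in_X0 : 0 < gamma -> in_Zplus V (s 0) -> ~ in_X0 V (s 0) ->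
  forall q, alpha_pt s q -> in_X0 V q.
Proof.
  intros Hg H0 HnX q [t [Ht Hcv]].
  pose proof (orbit_in_Zplus H0 HnX) as Horb.
  split.
  - apply (Sigma_closed V (fun n => s (t n))); [intro u; exact (D_cont _ _ _ (HdV u)) | | exact Hcv].
    intro n; apply (Horb (t n)).
  - destruct Hcv as [Hx [_ [Hz Hp]]].
    apply (UL_sequence (fun n => X (t n))); [exact Hx|].
    apply (cv_decaying_product _ (fun n => Z (t n)) (fun n => weight (t n)) (fun n => - t n)
             (X 0 / (Z 0 * weight 0)) (gamma / 2) (pz q) (exp ((4 - 3 * gamma) / 4 * ln (chi (pphi q)))));
      [lra | exact Ht | exact Hz | apply chi_power_cv, Hp |].
    intro n. pose proof (first_integral (t n)).
    pose proof (exp_pos ((4 - 3 * gamma) / 4 * ln (chi (P 0)))). pose proof (Horb 0) as [[_ ?] _].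
    replace (- (gamma / 2 * - t n)) with (gamma / 2 * t n) by ring.
    apply (Rmult_eq_reg_r (Z 0 * weight 0)); [|nra].
    field_simplify; [lra | nra].
Qed.

(* Forward in time, the factor [e^{- gamma tau / 2}] kills z:
   every omega-limit point lies on the boundary of Z^+. *)
Lemma omega_limit_in_bdZplus : 0 < gamma -> in_Zplus V (s 0) -> ~ in_X0 V (s 0) ->
  forall q, omega_pt s q -> in_bdZplus V q.
Proof.
  intros Hg H0 HnX q [t [Ht Hcv]].
  pose proof (orbit_in_Zplus H0 HnX) as Horb.
  apply (bdZplus_of_limit V (fun n => s (t n))); [intro n; apply (Horb (t n)) | exact Hcv |].
  destruct Hcv as [Hx [_ [Hz Hp]]].
  apply (UL_sequence (fun n => Z (t n))); [exact Hz|].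
  apply (cv_decaying_product _ (fun n => X (t n))
           (fun n => exp (- ((4 - 3 * gamma) / 4) * ln (chi (P (t n))))) t
           (Z 0 * weight 0 / X 0) (gamma / 2) (px q)
           (exp (- ((4 - 3 * gamma) / 4) * ln (chi (pphi q)))));
    [lra | exact Ht | exact Hx | apply chi_power_cv, Hp |].
  intro n. pose proof (first_integral (t n)).
  pose proof (exp_pos ((4 - 3 * gamma) / 4 * ln (chi (P (t n))))).
  pose proof (exp_pos (gamma / 2 * t n)). pose proof (Horb 0) as [_ ?].
  rewrite Ropp_mult_distr_l_reverse, !exp_Ropp.
  apply (Rmult_eq_reg_r (weight (t n) * exp (gamma / 2 * t n) * X 0));
    [|repeat apply Rmult_integral_contrapositive_currified; lra].
  field_simplify; [lra | repeat split; lra].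
Qed.

End Orbit.

Theorem lemma1 (gamma : R) (V dV chi dchi : R -> R) (s : R -> pt) :
  0 < gamma -> gamma < 2 -> gamma <> 4 / 3 ->
  Ck 3 V -> (forall t, derivable_pt_lim V t (dV t)) -> (forall t, 0 <= V t) ->
  Ck 3 chi -> (forall t, derivable_pt_lim chi t (dchi t)) -> (forall t, 0 < chi t) ->
  is_solution gamma V dV chi dchi s ->
  in_Zplus V (s 0) -> ~ in_X0 V (s 0) ->
  (forall q, alpha_pt s q -> in_X0 V q) /\
  (forall q, omega_pt s q -> in_bdZplus V q).
Proof.
  intros Hg _ _ _ HdV _ _ Hdchi Hchi Hsol H0 HnX. split.
  - exact (alpha_limit_in_X0 _ _ _ _ _ _ Hsol HdV Hdchi Hchi Hg H0 HnX).
  - exact (omega_limit_in_bdZplus _ _ _ _ _ _ Hsol HdV Hdchi Hchi Hg H0 HnX).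
Qed.
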